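(* Let $\mathbf C$ be a pointed restriction category and $Q\colon\mathbf C\to\mathrm{Ext}(\mathbf C)$ the quotient functor. For every well-pointed restriction category $\mathbf D$ and every restriction functor $F\colon\mathbf C\to\mathbf D$ sending the chosen restriction terminal object of $\mathbf C$ to that of $\mathbf D$ and full on points, there is a unique restriction functor $\hat F\colon\mathrm{Ext}(\mathbf C)\to\mathbf D$ that is full on points and satisfies $\hat F\circ Q=F$; it is given by $\hat F(A)=F(A)$, $\hat F([f])=F(f)$.
   Context: A restriction category is a category equipped with an assignment to each morphism $f\colon A\to B$ of an endomorphism $\overline{f}\colon A\to A$ such that (i) $f\circ\overline f=f$; (ii) $\overline f\circ\overline g=\overline g\circ\overline f$ whenever $f,g$ have a common domain; (iii) $\overline{g\circ\overline f}=\overline g\circ\overline f$ whenever $f,g$ have a common domain; (iv) $\overline g\circ f=f\circ\overline{g\circ f}$ whenever $g\circ f$ is defined. A morphism $f$ is total if $\overline f=\mathrm{id}$. A restriction functor is a functor $F$ with $F(\overline f)=\overline{F(f)}$. An object $1$ is restriction terminal if every object has exactly one total morphism to $1$. A pointed restriction category is a restriction category with a chosen restriction terminal object $1$; a point of $A$ is a morphism $1\to A$. It is well-pointed if moreover parallel $f,g\colon A\to B$ are equal whenever $f\circ a=g\circ a$ for all points $a$ of $A$. For parallel $f,g$ in a pointed restriction category, $f\approx g$ iff $f\circ a=g\circ a$ for all points $a$; $\mathrm{Ext}(\mathbf C)=\mathbf C/{\approx}$, a restriction category with $\overline{[f]}=[\overline f]$ (same chosen object $1$), and $Q(f)=[f]$.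 A functor $F\colon\mathbf C\to\mathbf D$ between pointed restriction categories is full on points if every point $p\colon 1\to F(A)$ in $\mathbf D$ equals $F(a)$ for some point $a\colon1\to A$ in $\mathbf C$. *)

From Stdlib Require Import ProofIrrelevance PropExtensionality
  FunctionalExtensionality ClassicalEpsilon.

Set Implicit Arguments.
Unset Strict Implicit.

Record Category := {
  Obj :> Type;
  Hom : Obj -> Obj -> Type;
  idm : forall A, Hom A A;
  comp : forall A B C, Hom B C -> Hom A B -> Hom A C;
  comp_id_l : forall A B (f : Hom A B), comp (idm B) f = f;
  comp_id_r : forall A B (f : Hom A B), comp f (idm A) = f;
  comp_assoc : forall A B C D (h : Hom C D) (g : Hom B C) (f : Hom A B),
      comp h (comp g f) = comp (comp h g) f
}.
Arguments Hom {c} _ _.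
Arguments idm {c} _.
Arguments comp {c A B C} _ _.

Record RestrictionCategory := {
  rcat :> Category;
  rst : forall (A B : rcat), Hom A B -> Hom A A;
  rst_R1 : forall (A B : rcat) (f : Hom A B), comp f (rst f) = f;
  rst_R2 : forall (A B C : rcat) (f : Hom A B) (g : Hom A C),
      comp (rst f) (rst g) = comp (rst g) (rst f);
  rst_R3 : forall (A B C : rcat) (f : Hom A B) (g : Hom A C),
      rst (comp g (rst f)) = comp (rst g) (rst f);
  rst_R4 : forall (A B C : rcat) (f : Hom A B) (g : Hom B C),
      comp (rst g) f = comp f (rst (comp g f))
}.
Arguments rst {r A B} _.

Definition total (C : RestrictionCategory) (A B : C) (f : Hom A B) : Prop :=
  rst f = idm A.

Definition restriction_terminal (C : RestrictionCategory) (one : C) : Prop :=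
  forall A : C, exists! t : Hom A one, total t.

Record PointedRC := {
  prc :> RestrictionCategory;
  pt : prc;
  pt_terminal : restriction_terminal pt
}.
Arguments pt {p}.

Definition well_pointed (C : PointedRC) : Prop :=
  forall (A B : C) (f g : Hom A B),
    (forall a : Hom pt A, comp f a = comp g a) -> f = g.

Record Functor (C D : Category) := {
  fobj :> C -> D;
  fmap : forall A B : C, Hom A B -> Hom (fobj A) (fobj B);
  fmap_id : forall A : C, fmap (idm A) = idm (fobj A);
  fmap_comp : forall (A B E : C) (g : Hom B E) (f : Hom A B),
      fmap (comp g f) = comp (fmap g) (fmap f)
}.
Arguments fobj {C D} _ _.
Arguments fmap {C D} _ {A B} _.

Definition fcomp (C D E : Category) (G : Functor D E) (F : Functor C D)
  : Functor C E.
Proof.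
  refine {| fobj := fun A => G (F A);
            fmap := fun A B f => fmap G (fmap F f) |}.
  - intros A. rewrite fmap_id. apply fmap_id.
  - intros A B E0 g f. rewrite fmap_comp. apply fmap_comp.
Defined.

Definition restriction_functor (C D : RestrictionCategory) (F : Functor C D)
  : Prop := forall (A B : C) (f : Hom A B), fmap F (rst f) = rst (fmap F f).

Definition full_on_points (C D : Category) (oneC : C) (oneD : D)
  (F : Functor C D) : Prop :=
  exists e : F oneC = oneD,
    forall (A : C) (p : Hom oneD (F A)),
      exists a : Hom oneC A,
        eq_rect (F oneC) (fun X => Hom X (F A)) (fmap F a) oneD e = p.

Section Ext.
Variable C : PointedRC.

Definition approx (A B : C) (f g : Hom A B) : Prop :=
  forall a : Hom pt A, comp f a = comp g a.

Definition ExtHom (A B : C) : Type :=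
  { P : Hom A B -> Prop | exists f : Hom A B, P = approx f }.

Definition cls (A B : C) (f : Hom A B) : ExtHom A B :=
  exist _ (approx f) (ex_intro _ f eq_refl).

Definition rep (A B : C) (x : ExtHom A B) : Hom A B :=
  proj1_sig (constructive_indefinite_description _ (proj2_sig x)).

Lemma approx_sym (A B : C) (f g : Hom A B) : approx f g -> approx g f.
Proof. intros H a; symmetry; apply H. Qed.

Lemma approx_trans (A B : C) (f g h : Hom A B) :
  approx f g -> approx g h -> approx f h.
Proof. intros H1 H2 a; rewrite H1; apply H2. Qed.

Lemma cls_eq (A B : C) (f g : Hom A B) : approx f g -> cls f = cls g.
Proof.
  intros H. unfold cls.
  assert (E : approx f = approx g).
  { apply functional_extensionality; intros h.
    apply propositional_extensionality; split; intros H'.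
    - exact (approx_trans (approx_sym H) H').
    - exact (approx_trans H H'). }
  apply eq_sig_hprop.
  - intros; apply proof_irrelevance.
  - exact E.
Qed.

Lemma cls_rep (A B : C) (x : ExtHom A B) : cls (rep x) = x.
Proof.
  unfold rep. destruct (constructive_indefinite_description _ _) as [f Hf].
  simpl. destruct x as [P HP]. simpl in Hf. subst P.
  unfold cls. f_equal. apply proof_irrelevance.
Qed.

Lemma cls_surj (A B : C) (x : ExtHom A B) : exists f, x = cls f.
Proof. exists (rep x). symmetry; apply cls_rep. Qed.

Lemma approx_rep_cls (A B : C) (f : Hom A B) : approx (rep (cls f)) f.
Proof.
  pose proof (f_equal (@proj1_sig _ _) (cls_rep (cls f))) as E.
  simpl in E. rewrite E. intros a; reflexivity.
Qed.

Lemma approx_comp (A B E : C) (g g' : Hom B E) (f f' : Hom A B) :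
  approx g g' -> approx f f' -> approx (comp g f) (comp g' f').
Proof.
  intros Hg Hf a. rewrite <- !comp_assoc. rewrite Hf. apply Hg.
Qed.

Lemma approx_rst (A B : C) (f f' : Hom A B) :
  approx f f' -> approx (rst f) (rst f').
Proof.
  intros H a. rewrite !rst_R4. rewrite H. reflexivity.
Qed.

Definition ecomp (A B E : C) (g : ExtHom B E) (f : ExtHom A B) : ExtHom A E :=
  cls (comp (rep g) (rep f)).

Definition erst (A B : C) (f : ExtHom A B) : ExtHom A A := cls (rst (rep f)).

Lemma ecomp_cls (A B E : C) (g : Hom B E) (f : Hom A B) :
  ecomp (cls g) (cls f) = cls (comp g f).
Proof. apply cls_eq, approx_comp; apply approx_rep_cls. Qed.

Lemma erst_cls (A B : C) (f : Hom A B) : erst (cls f) = cls (rst f).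
Proof. apply cls_eq, approx_rst, approx_rep_cls. Qed.

Definition ExtCat : Category.
Proof.
  refine {| Obj := C; Hom := @ExtHom; idm := fun A => cls (idm A);
            comp := @ecomp |}.
  - intros A B f. destruct (cls_surj f) as [f' ->].
    rewrite ecomp_cls, comp_id_l; reflexivity.
  - intros A B f. destruct (cls_surj f) as [f' ->].
    rewrite ecomp_cls, comp_id_r; reflexivity.
  - intros A B E D h g f.
    destruct (cls_surj h) as [h' ->]; destruct (cls_surj g) as [g' ->];
    destruct (cls_surj f) as [f' ->].
    rewrite !ecomp_cls, comp_assoc; reflexivity.
Defined.

Definition Ext : RestrictionCategory.
Proof.
  refine {| rcat := ExtCat; rst := @erst |}.
  - intros A B f. destruct (cls_surj f) as [f' ->]. simpl.
    rewrite erst_cls, ecomp_cls, rst_R1; reflexivity.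
  - intros A B E f g. simpl.
    destruct (cls_surj f) as [f' ->]; destruct (cls_surj g) as [g' ->].
    rewrite !erst_cls, !ecomp_cls, rst_R2; reflexivity.
  - intros A B E f g. simpl.
    destruct (cls_surj f) as [f' ->]; destruct (cls_surj g) as [g' ->].
    rewrite !erst_cls, !ecomp_cls, erst_cls, rst_R3; reflexivity.
  - intros A B E f g. simpl.
    destruct (cls_surj f) as [f' ->]; destruct (cls_surj g) as [g' ->].
    rewrite !erst_cls, !ecomp_cls, erst_cls, ecomp_cls, rst_R4; reflexivity.
Defined.

Definition Qfun : Functor C Ext.
Proof.
  refine {| fobj := fun A : C => (A : Ext); fmap := fun A B f => cls f |}.
  - intros A; reflexivity.
  - intros A B E g f. simpl. symmetry; apply ecomp_cls.
Defined.

End Ext.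

(** The proof has three parts.
    - Invariance: [F] identifies [≈]-equivalent arrows.  If [f ≈ g] then
      [F f] and [F g] agree on every point of [F A]; each such point is
      [F a] for a point [a] of [A], and [f a = g a].  Well-pointedness of
      [D] then gives [F f = F g].
    - Extension: any functor that identifies [≈]-equivalent arrows extends
      along [Q : C -> Ext C] to [Fhat], with [Fhat [f] = F f] (computed on
      a chosen representative).  [Fhat] factors [F] through [Q], inherits
      fullness on points and, when [F] does, preservation of restrictions.
    - Uniqueness: a functor out of [Ext C] is determined by its composite
      with [Q], since every arrow of [Ext C] is a class [[f]]. *)

From Stdlib Require Import ProofIrrelevance FunctionalExtensionality.

Lemma functor_ext (C D : Category) (F G : Functor C D) (e : fobj F = fobj G) :
  (forall (A B : C) (f : Hom A B),
      eq_rect (fobj F) (fun o => Hom (o A) (o B)) (fmap F f) (fobj G) e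
      = fmap G f) ->
  F = G.
Proof.
  destruct F as [o m1 id1 comp1], G as [o' m2 id2 comp2]; simpl in *.
  subst o'; simpl; intros Hm.
  assert (Em : m1 = m2).
  { apply functional_extensionality_dep; intros A.
    apply functional_extensionality_dep; intros B.
    apply functional_extensionality; intros f.
    apply Hm. }
  subst m2; f_equal; apply proof_irrelevance.
Qed.

Lemma eq_rect_comp (D : Category) (X Y B B' : D) (h : Hom B B') (u : Hom X B)
  (e : X = Y) :
  eq_rect X (fun Z => Hom Z B') (comp h u) Y e =
  comp h (eq_rect X (fun Z => Hom Z B) u Y e).
Proof. destruct e; reflexivity. Qed.

Lemma full_on_points_respects_approx (C D : PointedRC) (F : Functor C D) :
  well_pointed D -> full_on_points (@pt C) (@pt D) F ->
  forall (A B : C) (f g : Hom A B), approx f g -> fmap F f = fmap F g.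
Proof.
  intros WP [e points] A B f g Hfg.
  apply WP; intros p.
  destruct (points A p) as [a <-].
  rewrite <- !eq_rect_comp, <- !fmap_comp, Hfg.
  reflexivity.
Qed.

Section Extension.
Variables (C : PointedRC) (D : Category) (F : Functor C D).
Hypothesis F_respects_approx :
  forall (A B : C) (f g : Hom A B), approx f g -> fmap F f = fmap F g.

Definition ext_functor : Functor (Ext C) D.
Proof.
  refine (@Build_Functor (Ext C) D (fun A : C => fobj F A)
            (fun (A B : Ext C) (x : @Hom (Ext C) A B) =>
               fmap F (rep (x : ExtHom A B))) _ _).
  - intros A; simpl.
    rewrite (F_respects_approx _ _ _ _ (approx_rep_cls (@idm C A))).
    apply fmap_id.
  - intros A B E g f; simpl; unfold ecomp.
    rewrite (F_respects_approx _ _ _ _ (approx_rep_cls _)).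
    apply fmap_comp.
Defined.

Lemma ext_functor_cls (A B : C) (f : Hom A B) :
  @fmap _ _ ext_functor A B (cls f) = fmap F f.
Proof. exact (F_respects_approx _ _ _ _ (approx_rep_cls f)). Qed.

Lemma ext_functor_factors : fcomp ext_functor (Qfun C) = F.
Proof.
  apply (@functor_ext _ _ (fcomp ext_functor (Qfun C)) F eq_refl).
  intros A B f; exact (ext_functor_cls _ _ f).
Qed.

Lemma ext_functor_full_on_points (oneD : D) :
  full_on_points (@pt C) oneD F ->
  full_on_points (C := Ext C) (@pt C) oneD ext_functor.
Proof.
  intros [e points]; exists e; intros A p.
  destruct (points A p) as [a Ha].
  exists (cls a).
  rewrite (ext_functor_cls _ _ a); exact Ha.
Qed.

End Extension.

Arguments ext_functor {C D F} F_respects_approx.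
Arguments ext_functor_factors {C D F} F_respects_approx.
Arguments ext_functor_full_on_points {C D F} F_respects_approx {oneD}.

(** [Fhat] preserves restrictions whenever [F] does, since
    [rst [f] = [rst f]] in [Ext C]. *)
Lemma ext_functor_restriction {C : PointedRC} {D : RestrictionCategory}
  {F : Functor C D}
  (HF : forall (A B : C) (f g : Hom A B), approx f g -> fmap F f = fmap F g) :
  restriction_functor F -> restriction_functor (ext_functor HF).
Proof.
  intros RF A B x; simpl; unfold erst.
  rewrite (HF _ _ _ _ (approx_rep_cls _)).
  apply RF.
Qed.

(** Uniqueness: every functor [G] out of [Ext C] is the extension of
    [G ∘ Q], because each arrow of [Ext C] is the class of its representative. *)
Lemma ext_functor_unique {C : PointedRC} {D : Category} {F : Functor C D}
  (HF : forall (A B : C) (f g : Hom A B), approx f g -> fmap F f = fmap F g)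
  (G : Functor (Ext C) D) :
  fcomp G (Qfun C) = F -> G = ext_functor HF.
Proof.
  intros <-.
  apply (@functor_ext _ _ G (ext_functor HF) eq_refl).
  intros A B x; simpl.
  rewrite (cls_rep x); reflexivity.
Qed.

Theorem theorem4p4 (C D : PointedRC) (F : Functor C D) :
  well_pointed D ->
  restriction_functor F ->
  fobj F (@pt C) = @pt D ->
  full_on_points (@pt C) (@pt D) F ->
  exists Fhat : Functor (Ext C) D,
    restriction_functor Fhat /\
    full_on_points (C := Ext C) (@pt C) (@pt D) Fhat /\
    fcomp Fhat (Qfun C) = F /\
    (forall A : C, fobj Fhat A = fobj F A) /\
    (forall G : Functor (Ext C) D,
        restriction_functor G ->
        full_on_points (C := Ext C) (@pt C) (@pt D) G ->
        fcomp G (Qfun C) = F ->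
        G = Fhat).
Proof.
  intros WP RF _ FP.
  pose proof (@full_on_points_respects_approx C D F WP FP) as HF.
  exists (ext_functor HF); repeat split.
  - exact (ext_functor_restriction HF RF).
  - exact (ext_functor_full_on_points HF FP).
  - exact (ext_functor_factors HF).
  - intros G _ _ hG; exact (ext_functor_unique HF G hG).
Qed.
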